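(* Let $k$ be a positive integer and $n = 2k^2+2$. Construct a $k$-regular bipartite graph $G$ on $n$ vertices as follows: take two vertices $x$ and $y$ and add $k$ distinct (vertex-disjoint apart from $x,y$) $k$-resistors between $x$ and $y$. Then a.a.s. (as $k\to\infty$) the random subgraph $G(p)$ does not contain a perfect matching for any $p = o(n^{-1/4})$. On the other hand, a.a.s. $G(p)$ contains no isolated vertices for any $p = \omega(\log n/\sqrt n)$.
   Context: A $k$-resistor between two vertices $x$ and $y$ is the bipartite graph with vertex set $\{x,y\}\dot\cup X'\dot\cup Y'$, where $|X'|=|Y'|=k$, with designated vertices $x'\in X'$, $y'\in Y'$, and edge set $\{xx',yy'\}\cup(\{ab : a\in X', b\in Y'\}\setminus\{x'y'\})$. $G(p)$ retains each edge of $G$ independently with probability $p$. ''A.a.s.'' means with probability tending to $1$. *)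

From HB Require Import structures.
From mathcomp Require Import all_boot all_order all_algebra.
From mathcomp Require Import all_classical all_reals all_analysis.
Set Implicit Arguments. Unset Strict Implicit. Unset Printing Implicit Defensive.
Import Order.TTheory GRing.Theory Num.Theory.
Local Open Scope ring_scope.

(* A simple graph on a finite vertex type T is given by its edge set
   E : {set {set T}} whose elements are 2-element sets {u,v}.
   G(p) keeps each edge independently with probability p; the
   probability that the random edge set S (S \subset E) satisfies
   the property P is the usual product-measure sum. *)
Definition gnp_prob (R : realType) (T : finType) (E : {set {set T}}) (p : R)
    (P : {set {set T}} -> bool) : R :=
  \sum_(S : {set {set T}} | (S \subset E) && P S)
     p ^+ #|S| * (1 - p) ^+ (#|E| - #|S|)%N.

Definition has_perfect_matching (T : finType) (S : {set {set T}}) : bool :=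
  [exists M : {set {set T}},
     (M \subset S) && [forall v : T, #|[set e in M | v \in e]| == 1%N]].

Definition has_isolated_vertex (T : finType) (S : {set {set T}}) : bool :=
  [exists v : T, [forall e in S, v \notin e]].

(* Vertices: inl true = x, inl false = y,
   inr (i, false, j) = j-th vertex of X'_i, inr (i, true, j) = j-th vertex of Y'_i,
   for the i-th resistor (i < k) and j < k.  The designated vertices are
   x'_i = inr (i,false,0), y'_i = inr (i,true,0). *)
Definition resV (k : nat) : finType := (bool + ('I_k * bool * 'I_k))%type.

Definition res_adj0 (k : nat) (u v : resV k) : bool :=
  match u, v with
  | inl true, inr (_, false, j) => (j : nat) == 0%N
  | inl false, inr (_, true, j) => (j : nat) == 0%N
  | inr (i, false, j), inr (i', true, j') =>
      (i == i') && ~~ (((j : nat) == 0%N) && ((j' : nat) == 0%N))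
  | _, _ => false
  end.

Definition res_adj (k : nat) (u v : resV k) : bool := res_adj0 u v || res_adj0 v u.

Definition resE (k : nat) : {set {set resV k}} :=
  [set e : {set resV k} | [exists u, exists v, res_adj u v && (e == [set u; v])]].

Definition resN (k : nat) : nat := (2 * k ^ 2 + 2)%N.

(* A perfect matching must cover x and y.  If it matches x into the i-th resistor, through
   x'_i, then only k - 1 vertices of X'_i remain to be matched inside the resistor to the k
   vertices of Y'_i, so the leftover vertex of Y'_i is y'_i, matched to y.  Hence some resistor
   keeps both edges xx'_i and yy'_i, an event of probability at most k p^2 <= (p n^(1/4))^2.
   Conversely every vertex has degree k, so an isolated vertex appears with probability at most
   n (1 - p)^k <= n exp(-kp); as sqrt n <= 2k, p sqrt n >= 4 ln n gives kp >= 2 ln n and the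
   bound 1/n. *)

From HB Require Import structures.
From mathcomp Require Import all_boot all_order all_algebra.
From mathcomp Require Import all_classical all_reals all_analysis.
From mathcomp Require Import zify lra.
Import Order.TTheory GRing.Theory Num.Theory.
Import boot.fintype boot.finset.

Set Implicit Arguments. Unset Strict Implicit. Unset Printing Implicit Defensive.

Lemma sum_pred_card (T : finType) (A : {set T}) (P : pred T) :
  \sum_(x in A) (P x : nat) = #|[set x in A | P x]|.
Proof.
rewrite -sum1_card big_mkcond [RHS]big_mkcond /=; apply: eq_bigr => x _.
by rewrite inE; case: (x \in A); case: (P x).
Qed.

Lemma cardsI2 (T : finType) (u v : T) (A : {set T}) :
  u != v -> #|[set u; v] :&: A| = ((u \in A) + (v \in A))%N.
Proof.
move=> uv; have -> : [set u; v] :&: A = [set x in [set u; v] | x \in A].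
  by apply/setP => x; rewrite !inE.
by rewrite -sum_pred_card big_setU1 ?inE //= big_set1.
Qed.

Section PerfectMatching.
Variables (T : finType) (M : {set {set T}}).
Hypothesis M_perfect : forall v, #|[set e in M | v \in e]| = 1%N.

Lemma sum_matching_cardI (A : {set T}) : \sum_(e in M) #|e :&: A| = #|A|.
Proof.
transitivity (\sum_(e in M) \sum_(v in A) (v \in e : nat)).
  by apply: eq_bigr => e _; rewrite sum_pred_card setIC.
rewrite exchange_big /= -sum1_card; apply: eq_bigr => v _.
by rewrite sum_pred_card M_perfect.
Qed.

Lemma sum_matching_at (v : T) (ev : {set T}) (f : {set T} -> nat) :
  [set e in M | v \in e] = [set ev] -> \sum_(e in M) (v \in e) * f e = f ev.
Proof.
move=> Mv; rewrite -(big_set1 addn ev f) -Mv [LHS]big_mkcond [RHS]big_mkcond /=.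
by apply: eq_bigr => e _; rewrite inE; case: (e \in M); case: (v \in e); rewrite ?mul1n.
Qed.
End PerfectMatching.

Local Open Scope ring_scope.

Section RandomSubgraph.
Variables (R : realType) (V : finType) (E : {set {set V}}) (p : R).
Implicit Types (A B S : {set {set V}}).

Lemma gnp_weightE S : S \subset E ->
  p ^+ #|S| * (1 - p) ^+ (#|E| - #|S|)%N =
  \prod_e (if e \in S then p else if e \in E then 1 - p else 1).
Proof.
move=> SE.
transitivity (\prod_e ((if e \in S then p else 1) * (if e \in E :\: S then 1 - p else 1))).
  by rewrite big_split /= -!big_mkcond /= !prodr_const cardsDS.
apply: eq_bigr => e _; rewrite !inE.
by case: (boolP (e \in S)) => [/(subsetP SE) -> | _] /=; rewrite ?mulr1 ?mul1r.
Qed.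

Lemma gnp_prob_contains_avoids A B : A \subset E -> B \subset E -> [disjoint A & B] ->
  gnp_prob E p (fun S => (A \subset S) && [disjoint S & B]) = p ^+ #|A| * (1 - p) ^+ #|B|.
Proof.
move=> AE BE AB.
(* Expand a product of binomials over all potential edges: F e (resp. G e) is the weight of
   keeping (resp. deleting) e, set to 0 when the event or E forbids that choice. *)
pose F e := if (e \in E) && (e \notin B) then p else 0.
pose G e := if e \in A then 0 else if e \in E then 1 - p else 1.
have -> : p ^+ #|A| * (1 - p) ^+ #|B| = \prod_e (F e + G e).
  transitivity (\prod_e ((if e \in A then p else 1) * (if e \in B then 1 - p else 1))).
    by rewrite big_split /= -!big_mkcond /= !prodr_const.
  apply: eq_bigr => e _; rewrite /F /G.
  case: (boolP (e \in A)) => [eA | _].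
    by rewrite (subsetP AE _ eA) (disjointFr AB eA) addr0 mulr1.
  case: (boolP (e \in B)) => [eB | _]; first by rewrite (subsetP BE _ eB) add0r mul1r.
  by case: (e \in E) => /=; rewrite mulr1 ?add0r ?subrKC.
rewrite bigA_distr /gnp_prob [LHS]big_mkcond /=; apply: eq_bigr => S _.
case: (boolP (S \subset E)) => /= [SE | /subsetPn [e eS eE]]; last first.
  by rewrite (bigD1 e) //= eS /F (negbTE eE) mul0r.
case: (boolP (A \subset S)) => /= [AS | /subsetPn [e eA eS]]; last first.
  by rewrite (bigD1 e) //= (negbTE eS) /G eA mul0r.
case: (boolP [disjoint S & B]) => /= [SB | ]; last first.
  rewrite disjoint_subset => /subsetPn [e eS]; rewrite inE negbK => eB.
  by rewrite (bigD1 e) //= eS /F eB andbF mul0r.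
rewrite gnp_weightE //; apply: eq_bigr => e _; rewrite /F /G.
case: (boolP (e \in S)) => [eS | eS]; first by rewrite (subsetP SE _ eS) (disjointFr SB eS).
by case: (boolP (e \in A)) => // eA; rewrite (subsetP AS _ eA) in eS.
Qed.

Lemma eq_gnp_prob (P Q : {set {set V}} -> bool) :
  (forall S, S \subset E -> P S = Q S) -> gnp_prob E p P = gnp_prob E p Q.
Proof. by move=> PQ; apply: eq_bigl => S; case: (boolP (S \subset E)) => // /PQ ->. Qed.

Lemma gnp_prob_contains A : A \subset E -> gnp_prob E p (fun S => A \subset S) = p ^+ #|A|.
Proof.
move=> AE; have B0 : [disjoint A & set0] by rewrite -setI_eq0 setI0.
have := gnp_prob_contains_avoids AE (sub0set E) B0; rewrite cards0 expr0 mulr1 => <-.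
by apply: eq_gnp_prob => S _; rewrite -[in RHS]setI_eq0 setI0 eqxx andbT.
Qed.

Lemma gnp_prob_avoids B :
  B \subset E -> gnp_prob E p (fun S => [disjoint S & B]) = (1 - p) ^+ #|B|.
Proof.
move=> BE; have B0 : [disjoint set0 & B] by rewrite -setI_eq0 set0I.
have := gnp_prob_contains_avoids (sub0set E) BE B0; rewrite cards0 expr0 mul1r => <-.
by apply: eq_gnp_prob => S _; rewrite sub0set.
Qed.

Hypothesis p01 : 0 <= p <= 1.

Lemma gnp_weight_ge0 S : 0 <= p ^+ #|S| * (1 - p) ^+ (#|E| - #|S|)%N.
Proof. by case/andP: p01 => p0 p1; rewrite mulr_ge0 // exprn_ge0 // subr_ge0. Qed.

Lemma gnp_prob_ge0 P : 0 <= gnp_prob E p P.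
Proof. exact/sumr_ge0/(fun S _ => gnp_weight_ge0 S). Qed.

Lemma le_gnp_prob (P Q : {set {set V}} -> bool) :
  (forall S, S \subset E -> P S -> Q S) -> gnp_prob E p P <= gnp_prob E p Q.
Proof.
move=> PQ; rewrite /gnp_prob [X in X <= _]big_mkcond [X in _ <= X]big_mkcond /=.
apply: ler_sum => S _; case: (boolP (S \subset E)) => //= SE.
case: (boolP (P S)) => [PS | _]; first by rewrite (PQ S SE PS).
by case: (Q S); rewrite ?gnp_weight_ge0.
Qed.

Lemma gnp_prob_exists_le (I : finType) (Q : I -> {set {set V}} -> bool) :
  gnp_prob E p (fun S => [exists i, Q i S]) <= \sum_i gnp_prob E p (Q i).
Proof.
rewrite /gnp_prob big_mkcond /=.
under [X in _ <= X]eq_bigr do rewrite big_mkcond /=.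
rewrite [X in _ <= X]exchange_big; apply: ler_sum => S _.
case: (boolP (S \subset E)) => //= SE; last by rewrite big1.
have w_ge0 i : 0 <= (if Q i S then p ^+ #|S| * (1 - p) ^+ (#|E| - #|S|)%N else 0).
  by case: (Q i S); rewrite ?gnp_weight_ge0.
case: existsP => [[i Qi] | _]; last exact: sumr_ge0 (fun i _ => w_ge0 i).
by rewrite (bigD1 i) //= Qi lerDl sumr_ge0.
Qed.

End RandomSubgraph.

Section ResistorGraph.
Variable k : nat.
Implicit Types (i : 'I_k) (b : bool) (v : resV k) (e : {set resV k}).

Definition side i b : {set resV k} := [set inr (i, b, j) | j : 'I_k].

Lemma card_side i b : #|side i b| = k.
Proof. by rewrite card_imset ?card_ord // => j j' [->]. Qed.

Lemma mem_side_inl i b c : (inl c \in side i b) = false.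
Proof. by apply/imsetP => -[]. Qed.

Lemma mem_side_inr i b i' b' j : (inr (i', b', j) \in side i b) = (i' == i) && (b' == b).
Proof.
apply/imsetP/andP => [[j' _ [-> ->]] // | [/eqP -> /eqP ->]].
by exists j.
Qed.

Definition ord0_of i : 'I_k := Ordinal (leq_ltn_trans (leq0n i) (ltn_ord i)).

Definition terminal_edge b i : {set resV k} := [set inl b; inr (i, ~~ b, ord0_of i)].

Lemma terminal_edge_in b i : terminal_edge b i \in resE k.
Proof.
rewrite inE; apply/existsP; exists (inl b); apply/existsP; exists (inr (i, ~~ b, ord0_of i)).
by rewrite eqxx andbT /res_adj; case: b.
Qed.

Lemma card_terminal_edgeI b i i' b' :
  #|terminal_edge b i :&: side i' b'| = ((i == i') && (~~ b == b') : nat).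
Proof. by rewrite cardsI2 // mem_side_inl mem_side_inr. Qed.

Lemma resE_adj0 e : e \in resE k -> exists u v, res_adj0 u v /\ e = [set u; v].
Proof.
rewrite inE => /existsP [u /existsP [v /andP [/orP [] huv /eqP ->]]].
  by exists u, v.
by exists v, u; rewrite setUC.
Qed.

Lemma resE_terminal b e : e \in resE k -> inl b \in e -> exists i, e = terminal_edge b i.
Proof.
case/resE_adj0 => -[[]|[[i1 []] j1]] [[[]|[[i2 []] j2]] [//= huv ->]];
  rewrite in_set2 => /orP [] /eqP // [->]; exists i2.
all: congr [set _; inr (_, _, _)]; apply: val_inj; exact/eqP.
Qed.

(* Summed over a perfect matching this says: x is matched into resistor i iff y is. *)
Lemma edge_balance i e : e \in resE k ->
  (#|e :&: side i false| + (inl false \in e) * #|e :&: side i true| =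
   #|e :&: side i true| + (inl true \in e) * #|e :&: side i false|)%N.
Proof.
case/resE_adj0 => -[[]|[[i1 []] j1]] [[[]|[[i2 []] j2]] [//= huv ->]];
  rewrite !cardsI2 ?in_set2 ?mem_side_inl ?mem_side_inr /= ?andbT ?andbF /=
          ?addn0 ?add0n ?mul1n //;
  try by apply/eqP; case.
by case/andP: huv => /eqP ->.
Qed.

Lemma perfect_matching_terminal_edges (S : {set {set resV k}}) :
  S \subset resE k -> has_perfect_matching S ->
  exists i, (terminal_edge true i \in S) && (terminal_edge false i \in S).
Proof.
move=> SE /existsP [M /andP [MS /forallP M1]].
have {}M1 v : #|[set e in M | v \in e]| = 1%N by apply/eqP.
have ME e : e \in M -> e \in resE k by move=> eM; apply/(subsetP SE)/(subsetP MS).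
have edge_at b : exists2 i, [set e in M | inl b \in e] = [set terminal_edge b i]
                          & terminal_edge b i \in M.
  have /eqP/cards1P [e Mb] := M1 (inl b).
  have /setIdP [eM be] : e \in [set e in M | inl b \in e] by rewrite Mb set11.
  by have [i ei] := resE_terminal (ME _ eM) be; exists i; rewrite -ei.
have [i Mx xM] := edge_at true; have [i' My yM] := edge_at false.
have balance :
    (\sum_(e in M) (#|e :&: side i false| + (inl false \in e) * #|e :&: side i true|) =
     \sum_(e in M) (#|e :&: side i true| + (inl true \in e) * #|e :&: side i false|))%N.
  by apply: eq_bigr => e eM; apply/edge_balance/ME.
rewrite !big_split /= !sum_matching_cardI // (sum_matching_at _ My) (sum_matching_at _ Mx)
  !card_side !card_terminal_edgeI eqxx /= in balance.
have i'i : i' = i by apply/eqP; move: balance; case: (i' == i) => //=; lia.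
by subst i'; exists i; rewrite (subsetP MS _ xM) (subsetP MS _ yM).
Qed.

Lemma res_adj_irr v : res_adj v v = false.
Proof. by case: v => [[]|[[i []] j]]. Qed.

(* The j-th neighbour of v; x'_i (resp. y'_i) has x (resp. y) in place of the missing y'_i
   (resp. x'_i). *)
Definition res_nbr v (j : 'I_k) : resV k :=
  match v with
  | inl b => inr (j, ~~ b, ord0_of j)
  | inr (i, b, j0) =>
      if (j0 == 0 :> nat) && (j == 0 :> nat) then inl (~~ b) else inr (i, ~~ b, j)
  end.

Lemma res_adj_nbr v j : res_adj v (res_nbr v j).
Proof.
rewrite /res_adj; case: v => [[]|[[i []] j0]] /=; rewrite ?eqxx //.
all: case E0: (j0 == 0 :> nat); case E: (j == 0 :> nat); by rewrite /= ?eqxx ?E0 ?E ?orbT.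
Qed.

Lemma res_nbr_inj v : injective (res_nbr v).
Proof.
move=> j1 j2; case: v => [b|[[i b] j0]] /=; first by case.
case: ifP => [/andP [_ /eqP j10]|_]; case: ifP => [/andP [_ /eqP j20]|_] //; last by case.
by move=> _; apply: val_inj; rewrite /= j10 j20.
Qed.

Definition edges_at v : {set {set resV k}} := [set [set v; res_nbr v j] | j : 'I_k].

Lemma edges_at_sub v : edges_at v \subset resE k.
Proof.
apply/subsetP => _ /imsetP [j _ ->]; rewrite inE.
by apply/existsP; exists v; apply/existsP; exists (res_nbr v j); rewrite res_adj_nbr eqxx.
Qed.

Lemma card_edges_at v : #|edges_at v| = k.
Proof.
rewrite card_imset ?card_ord // => j1 j2 /= e12; apply: (@res_nbr_inj v).
have /set2P [e1v|//] : res_nbr v j1 \in [set v; res_nbr v j2] by rewrite -e12 set22.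
by have := res_adj_nbr v j1; rewrite e1v res_adj_irr.
Qed.

Lemma isolated_disjoint_edges_at (S : {set {set resV k}}) v :
  [forall e in S, v \notin e] -> [disjoint S & edges_at v].
Proof.
move/forallP => Sv; rewrite -setI_eq0; apply/eqP/setP => e; rewrite !inE.
apply/andP => -[eS /imsetP [j _ ej]].
by have := Sv e; rewrite eS ej set21.
Qed.

Lemma card_resV : #|resV k| = resN k.
Proof. by rewrite card_sum !card_prod card_bool !card_ord /resN; lia. Qed.

End ResistorGraph.

Lemma gnp_perfect_matching_le (R : realType) k (p : R) : 0 <= p <= 1 ->
  gnp_prob (resE k) p (@has_perfect_matching (resV k)) <= k%:R * p ^+ 2.
Proof.
move=> p01; pose both_terminal (i : 'I_k) (S : {set {set resV k}}) :=
  (terminal_edge true i \in S) && (terminal_edge false i \in S).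
apply: le_trans (le_gnp_prob p01 (Q := fun S => [exists i, both_terminal i S]) _) _.
  by move=> S SE /(perfect_matching_terminal_edges SE) /existsP.
apply: le_trans (gnp_prob_exists_le _ p01 both_terminal) _.
rewrite mulr_natl -[k in _ *+ k]card_ord -sumr_const; apply: ler_sum => i _.
have card_xy : #|[set terminal_edge true i; terminal_edge false i]| = 2%N.
  by rewrite cards2; case: eqP => // /setP /(_ (inl true)); rewrite !in_set2.
have sub_xy : [set terminal_edge true i; terminal_edge false i] \subset resE k.
  by apply/subsetP => e /set2P [] ->; rewrite terminal_edge_in.
rewrite -card_xy -(gnp_prob_contains p sub_xy).
apply: le_gnp_prob => // S _ bothS.
by apply/subsetP => e /set2P [] ->; case/andP: bothS.
Qed.

Lemma gnp_isolated_vertex_le (R : realType) k (p : R) : 0 <= p <= 1 ->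
  gnp_prob (resE k) p (@has_isolated_vertex (resV k)) <= (resN k)%:R * (1 - p) ^+ k.
Proof.
move=> p01.
apply: le_trans (gnp_prob_exists_le _ p01 (fun v S => [forall e in S, v \notin e])) _.
rewrite mulr_natl -card_resV -sumr_const; apply: ler_sum => v _.
rewrite -[in X in _ <= X](card_edges_at v) -(gnp_prob_avoids p (edges_at_sub v)).
by apply: le_gnp_prob => // S _; apply: isolated_disjoint_edges_at.
Qed.

Lemma onem_expr_le_expR (R : realType) (p : R) k :
  p <= 1 -> (1 - p) ^+ k <= expR (- (k%:R * p)).
Proof.
move=> p1; rewrite -mulrN expRM_natl lerXn2r ?nnegrE ?subr_ge0 ?expR_ge0 //.
exact: expR_ge1Dx.
Qed.

Lemma nat_le_sqr_root4_resN (R : realType) k :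
  k%:R <= ((resN k)%:R `^ (4%:R)^-1) ^+ 2 :> R.
Proof.
set q := _ `^ _.
have q4 : q ^+ 4 = (resN k)%:R.
  by rewrite /q -powR_mulrn ?powR_ge0 // -powRrM mulVf ?pnatr_eq0 // powRr1 // ler0n.
rewrite -(@ler_pXn2r _ 2) ?nnegrE ?exprn_ge0 ?ler0n ?powR_ge0 // -exprM q4 -natrX ler_nat.
by rewrite /resN; lia.
Qed.

Lemma sqrt_resN_le (R : realType) k : (0 < k)%N -> Num.sqrt (resN k)%:R <= 2 * k%:R :> R.
Proof.
move=> k0; rewrite -[2 * k%:R]ger0_norm ?mulr_ge0 ?ler0n // -sqrtr_sqr ler_wsqrtr //.
by rewrite -natrM -natrX ler_nat /resN; nia.
Qed.

Lemma gnp_isolated_vertex_le_harmonic (R : realType) k (p : R) :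
  (0 < k)%N -> 0 <= p <= 1 -> 4 <= p * Num.sqrt (resN k)%:R / ln (resN k)%:R ->
  gnp_prob (resE k) p (@has_isolated_vertex (resV k)) <= k.+1%:R^-1.
Proof.
move=> k0 p01 p_large; apply: le_trans (gnp_isolated_vertex_le k p01) _.
case/andP: p01 => p0 p1; set n : R := (resN k)%:R.
have n1 : 1 < n by rewrite ltr1n /resN; lia.
have n0 : 0 < n by apply: lt_trans n1.
have kp : 2 * ln n <= k%:R * p.
  have : 4 * ln n <= p * Num.sqrt n by rewrite -ler_pdivlMr ?ln_gt0.
  by have := ler_wpM2l p0 (sqrt_resN_le R k0); nra.
have inv_sqr : expR (- (2 * ln n)) = (n ^+ 2)^-1 by rewrite expRN expRM_natl lnK.
apply: le_trans (_ : n * (n ^+ 2)^-1 <= _).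
  apply: ler_wpM2l; first exact: ltW.
  by rewrite -inv_sqr (le_trans (onem_expr_le_expR k p1)) // ler_expR lerN2.
have k1_le_n : k.+1%:R <= n by rewrite /n ler_nat /resN; nia.
by rewrite expr2 invfM mulrA mulfV ?gt_eqF // mul1r lef_pV2 // posrE ltr0n.
Qed.

Unset Implicit Arguments.
Local Open Scope classical_set_scope.

Theorem propositionA2 (R : realType) :
  (forall p : nat -> R, (forall k, 0 <= p k <= 1) ->
     (fun k => p k * ((resN k)%:R `^ (4%:R)^-1)) @ \oo --> 0 ->
     (fun k => gnp_prob (resE k) (p k) (@has_perfect_matching (resV k)))
       @ \oo --> 0)
  /\
  (forall p : nat -> R, (forall k, 0 <= p k <= 1) ->
     (fun k => p k * Num.sqrt ((resN k)%:R) / ln ((resN k)%:R)) @ \oo --> +oo ->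
     (fun k => gnp_prob (resE k) (p k) (@has_isolated_vertex (resV k)))
       @ \oo --> 0).
Proof.
split=> p p01 p_lim.
  pose f k := p k * (resN k)%:R `^ (4%:R)^-1.
  apply: (@squeeze_cvgr _ _ _ _ (fun=> 0) (fun k => f k * f k)).
  - near=> k; rewrite gnp_prob_ge0 //= -expr2.
    apply: le_trans (gnp_perfect_matching_le k (p01 k)) _.
    rewrite exprMn [X in _ <= X]mulrC ler_wpM2r ?exprn_ge0 ?nat_le_sqr_root4_resN //.
    by case/andP: (p01 k).
  - exact: (cvg_cst 0).
  - by rewrite -(mulr0 0); apply: cvgM.
apply: (@squeeze_cvgr _ _ _ _ (fun=> 0) harmonic).
- near=> k; rewrite gnp_prob_ge0 //= gnp_isolated_vertex_le_harmonic //; near: k.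
  + exact: nbhs_infty_gt.
  + exact: (proj1 (cvgryPge _) p_lim 4).
- exact: (cvg_cst 0).
- exact: cvg_harmonic.
Unshelve. all: end_near.
Qed.
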